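(* Let $(X,+,d)$ be an Abelian metric group with translation-invariant metric $d$ such that every non-empty open ball in $X$ contains infinitely many elements. Then (i) the family $\{A\subset X:\ A\text{ is finite and } S(A)\neq\{0\}\}$ is dense in $K(X)$; (ii) the family $NT(X)$ is dense in $K(X)$.
   Context: $d$ satisfies $d(x,y)=d(x+z,y+z)$ for all $x,y,z\in X$; $0$ is the neutral element. $K(X)$ is the family of non-empty compact subsets of $X$ with the Pompeiu–Hausdorff metric $d_H(A,B)=\max\{\sup_{a\in A}d(a,B),\sup_{b\in B}d(A,b)\}$. The spectre of $A\subset X$ is $S(A):=\{z\in X:\ \forall_{a\in A}\ (a+z\in A \text{ or } a-z\in A)\}$. A set $A\subset X$ is a net-set if it is finite, has at least three elements, and for every pair of distinct two-element subsets $\{z,t\}\neq\{u,v\}$ of $A$ we have $\{z-t,t-z\}\cap\{v-u,u-v\}=\emptyset$; $NT(X)$ is the family of all net-sets. *)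

From HB Require Import structures.
From mathcomp Require Import all_boot all_order all_algebra.
From mathcomp Require Import all_classical all_reals.
Set Implicit Arguments. Unset Strict Implicit. Unset Printing Implicit Defensive.
Import Order.TTheory GRing.Theory Num.Theory.
Local Open Scope classical_set_scope.
Local Open Scope ring_scope.

Section Defs.
Variables (R : realType) (X : zmodType) (d : X -> X -> R).

Definition is_metric : Prop :=
  [/\ (forall x y, 0 <= d x y),
      (forall x y, d x y = 0 <-> x = y),
      (forall x y, d x y = d y x) &
      (forall x y z, d x z <= d x y + d y z)].

Definition translation_invariant : Prop :=
  forall x y z, d x y = d (x + z) (y + z).

Definition dball (c : X) (r : R) : set X := [set y | d c y < r].

Definition dopen (U : set X) : Prop :=
  forall x, U x -> exists2 r : R, 0 < r & dball x r `<=` U.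

Definition dcompact (A : set X) : Prop :=
  forall (I : Type) (U : I -> set X), (forall i, dopen (U i)) ->
    A `<=` \bigcup_(i in [set: I]) U i ->
    exists F : set I, finite_set F /\ A `<=` \bigcup_(i in F) U i.

Definition KX (A : set X) : Prop := A !=set0 /\ dcompact A.

Definition dpt_set (x : X) (B : set X) : R := inf [set d x b | b in B].

Definition dH (A B : set X) : R :=
  Num.max (sup [set dpt_set a B | a in A]) (sup [set dpt_set b A | b in B]).

Definition spectre (A : set X) : set X :=
  [set z | forall a, A a -> A (a + z) \/ A (a - z)].

Definition net_set (A : set X) : Prop :=
  [/\ finite_set A,
      (exists x y z, [/\ A x, A y & A z] /\ [/\ x <> y, y <> z & x <> z]) &
      (forall z t u v, A z -> A t -> A u -> A v -> z <> t -> u <> v ->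
         ~ ((z = u /\ t = v) \/ (z = v /\ t = u)) ->
         [/\ z - t <> v - u, z - t <> u - v, t - z <> v - u & t - z <> u - v])].

Definition dense_in_KX (F : set X -> Prop) : Prop :=
  forall K, KX K -> forall e : R, 0 < e ->
    exists A, [/\ F A, KX A & dH K A < e].

End Defs.

(* Both families are built from a finite r-net {f_1, ..., f_n} of K.
   (i) For a point z <> 0 close to 0 (it exists since balls are infinite), the
   set {f_i} ∪ {f_i + z} is Hausdorff-close to K and z lies in its spectre.
   (ii) Choose points x_i close to f_i one at a time so that the x_i form a
   Sidon set: every relation x_a + x_b = x_c + x_e is trivial.  A Sidon set
   with at least three points is a net-set.  Each new x must avoid finitely
   many values, which is possible because balls are infinite, and must satisfy
   x + x <> b + c for distinct earlier points b, c.  When doubling is trivial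
   near 0 this holds as long as f + f <> b + c, which is kept as an invariant
   for all centres f; otherwise the doubles of points of any ball around 0 form
   an infinite set, and x + x can avoid the finitely many sums b + c. *)

From HB Require Import structures.
From mathcomp Require Import all_boot all_order all_algebra.
From mathcomp Require Import all_classical all_reals.
From mathcomp Require Import lra.
Set Implicit Arguments. Unset Strict Implicit. Unset Printing Implicit Defensive.
Import Order.TTheory GRing.Theory Num.Theory.
Local Open Scope classical_set_scope.
Local Open Scope ring_scope.

Section Sidon.
Variable X : zmodType.

(* Doubling need not be injective, so [a + a = c + c] with [a <> c] is allowed;
   net-sets only constrain pairs of distinct points. *)
Definition sidon (S : seq X) := forall a b c e,
  a \in S -> b \in S -> c \in S -> e \in S -> a + b = c + e ->
  [\/ a = c /\ b = e, a = e /\ b = c | a = b /\ c = e].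

Definition midpoint_free (cs S : seq X) := forall b c g,
  b \in S -> c \in S -> b <> c -> g \in cs -> b + c <> g + g.

Lemma sidon_cons (S : seq X) x : sidon S -> x \notin S ->
  (forall a b c, a \in S -> b \in S -> c \in S -> x + a <> b + c) ->
  (forall b c, b \in S -> c \in S -> b <> c -> x + x <> b + c) ->
  sidon (x :: S).
Proof.
move=> hS xS hxa hxx a b c e; rewrite !in_cons.
have neq_x y : y \in S -> y = x -> False by move=> yS yx; rewrite -yx yS in xS.
case/orP => [/eqP-> | aS]; case/orP => [/eqP-> | bS];
case/orP => [/eqP-> | cS]; case/orP => [/eqP-> | eS] => E.
- by constructor 1.
- by move/addrI: E => /esym /(neq_x _ eS).
- by move/addIr: E => /esym /(neq_x _ cS).
- have [->|ce] := eqVneq c e; first by constructor 3.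
  by case: (hxx c e cS eS (elimN eqP ce)).
- by move/addrI: E => /(neq_x _ bS).
- by constructor 1; split => //; apply: addrI E.
- by constructor 2; split => //; apply: (@addrI _ x); rewrite E addrC.
- by case: (hxa b c e).
- by move/addIr: E => /(neq_x _ aS).
- by constructor 2; split => //; apply: (@addIr _ x); rewrite E addrC.
- by constructor 1; split => //; apply: addIr E.
- by case: (hxa a c e) => //; rewrite addrC.
- have [->|ab] := eqVneq a b; first by constructor 3.
  by case: (hxx a b aS bS (elimN eqP ab)).
- by case: (hxa e a b).
- by case: (hxa c a b) => //; rewrite addrC.
- exact: hS.
Qed.

Lemma midpoint_free_cons (cs S : seq X) x : midpoint_free cs S ->
  (forall g b, g \in cs -> b \in S -> x + b <> g + g) ->
  midpoint_free cs (x :: S).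
Proof.
move=> hC hx b c g; rewrite !in_cons.
case/orP => [/eqP-> | bS]; case/orP => [/eqP-> | cS] => // bc gc.
- exact: hx.
- by rewrite addrC; apply: hx.
- exact: hC.
Qed.

Lemma sidon_net_set (xs : seq X) :
  uniq xs -> sidon xs -> (2 < size xs)%N -> net_set [set` xs].
Proof.
move=> xs_uniq hS xs_size.
have [s0 s1] : (0 < size xs)%N /\ (1 < size xs)%N by split; apply: leq_trans xs_size.
split; first exact: finite_seq.
  exists (nth 0 xs 0), (nth 0 xs 1), (nth 0 xs 2).
  by split; split; first [apply: mem_nth | move=> /eqP; rewrite nth_uniq].
have sub_to_add (a b c e : X) : a - b = c - e -> a + e = c + b.
  by move=> h; rewrite -[a](subrK b) h addrAC subrK.
move=> z t u v zS tS uS vS zt uv same_pair.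
by split => /sub_to_add E;
  [ have := hS _ _ _ _ zS uS vS tS E | have := hS _ _ _ _ zS vS uS tS E
  | have := hS _ _ _ _ tS uS vS zS E | have := hS _ _ _ _ tS vS uS zS E ];
  case => -[? ?]; subst; tauto.
Qed.

Lemma spectre_cat_shift (s : seq X) z :
  spectre [set` s ++ map (fun f => f + z) s] z.
Proof.
move=> a; rewrite /= mem_cat => /orP[as_|].
  by left; rewrite mem_cat (map_f (fun f => f + z)) ?orbT.
by move=> /mapP[f fs ->]; right; rewrite addrK mem_cat fs.
Qed.

End Sidon.

Section Metric.
Variables (R : realType) (X : zmodType) (d : X -> X -> R).
Hypothesis d_metric : is_metric d.

Lemma dist_ge0 x y : 0 <= d x y. Proof. by case: d_metric. Qed.
Lemma distC x y : d x y = d y x. Proof. by case: d_metric. Qed.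
Lemma dist_triangle x y z : d x z <= d x y + d y z. Proof. by case: d_metric. Qed.
Lemma dist_eq0 x y : (d x y = 0) <-> (x = y). Proof. by case: d_metric. Qed.
Lemma dist_xx x : d x x = 0. Proof. exact/dist_eq0. Qed.

Lemma dH_le (K A : set X) (r : R) : K !=set0 -> A !=set0 ->
  (forall a, K a -> exists2 x, A x & d a x <= r) ->
  (forall x, A x -> exists2 a, K a & d x a <= r) -> dH d K A <= r.
Proof.
have dpt_le (B : set X) y b : B b -> dpt_set d y B <= d y b.
  by move=> Bb; apply: ge_inf; [exists 0 => _ [? _ <-]; exact: dist_ge0 | exists b].
move=> [k Kk] [y Ay] KA AK; rewrite /dH ge_max; apply/andP; split; apply: ge_sup.
- by exists (dpt_set d k A); exists k.
- by move=> _ [a Ka <-]; have [x Ax] := KA a Ka; apply/le_trans/dpt_le.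
- by exists (dpt_set d y K); exists y.
- by move=> _ [x Ax <-]; have [a Ka] := AK x Ax; apply/le_trans/dpt_le.
Qed.

Lemma finite_dcompact (s : seq X) : dcompact d [set` s].
Proof.
move=> I U _; elim: s => [|a s IH] cov.
  by exists set0; split; [exact: finite_set0 | move=> x].
have [|F [fF sF]] := IH.
  by move=> x xs; apply: cov; rewrite /= in_cons xs orbT.
have [i _ Ui] := cov a (mem_head a s).
exists ([set i] `|` F); split; first by rewrite finite_setU; split => //; exact: finite_set1.
move=> x; rewrite /= in_cons => /orP[/eqP->|xs]; first by exists i => //; left.
by have [j Fj Uj] := sF x xs; exists j => //; right.
Qed.

Lemma dcompact_finite_net (K : set X) r : KX d K -> 0 < r -> exists cs : seq X,
  [/\ cs != [::], (forall f, f \in cs -> K f) & forall a, K a -> exists2 f, f \in cs & d f a < r].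
Proof.
move=> [[a0 Ka0] K_compact] r0.
pose U f := [set y | K f /\ d f y < r].
have U_open f : dopen d (U f).
  move=> y [Kf fy]; exists (r - d f y); first by rewrite subr_gt0.
  by move=> z; rewrite /dball /= => yz; split => //; have := dist_triangle f y z; lra.
have [|F [/finite_seqP[s sF] KF]] := K_compact X U U_open.
  by move=> a Ka; exists a => //; split; rewrite ?dist_xx.
have net a : K a -> exists2 f, f \in [seq f <- s | `[< K f >]] & d f a < r.
  move=> Ka; have [f Ff [Kf fa]] := KF a Ka.
  by exists f; rewrite // mem_filter asboolT //; move: Ff; rewrite sF.
exists [seq f <- s | `[< K f >]]; split => //.
- by have [f fin _] := net a0 Ka0; apply: contraTneq fin => ->.
- by move=> f; rewrite mem_filter => /andP[/asboolP].
Qed.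

Hypothesis d_invariant : translation_invariant d.
Hypothesis ball_infinite :
  forall (c : X) (r : R), dball d c r !=set0 -> infinite_set (dball d c r).

Lemma dist_translate f s : d f (s + f) = d 0 s.
Proof. by rewrite (d_invariant 0 s f) add0r. Qed.

Lemma dist_double s : d 0 (s + s) <= d 0 s + d 0 s.
Proof. by rewrite -{2}(dist_translate s s); apply: dist_triangle. Qed.

Lemma ball_avoid_seq f r (P : seq X) : 0 < r -> exists x, d f x < r /\ x \notin P.
Proof.
move=> r0; have /ball_infinite : dball d f r !=set0 by exists f; rewrite /dball /= dist_xx.
apply: contra_notP => none; apply: (sub_finite_set _ (finite_seq P)) => x fx.
by apply: contrapT => xP; apply: none; exists x; split => //; apply/negP.
Qed.

Lemma dist0_nonzero_bounded_below (t : seq X) : exists2 eta : R, 0 < eta &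
  forall c, c \in t -> c != 0 -> eta <= d 0 c.
Proof.
elim: t => [|a t [eta eta0 IH]]; first by exists 1.
have [->|a0] := eqVneq a 0.
  by exists eta => // c; rewrite in_cons => /orP[/eqP->|/IH//]; rewrite eqxx.
have da : 0 < d 0 a.
  by rewrite lt_neqAle dist_ge0 andbT eq_sym; apply: contra a0 => /eqP/dist_eq0 <-.
exists (Num.min eta (d 0 a)); first by rewrite lt_min eta0 da.
by move=> c; rewrite in_cons ge_min => /orP[/eqP->|/IH h /h ->]; rewrite ?lexx ?orbT.
Qed.

Definition doubling_locally_trivial :=
  exists2 r : R, 0 < r & forall s, d 0 s < r -> s + s = 0.

Lemma doubles_ball_infinite r : ~ doubling_locally_trivial -> 0 < r ->
  infinite_set [set s + s | s in dball d 0 r].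
Proof.
move=> not_trivial r0 /finite_seqP[t tE].
have [eta eta0 bound] := dist0_nonzero_bounded_below t.
apply: not_trivial; exists (Num.min r (eta / 2)); first by rewrite lt_min r0 divr_gt0.
move=> s; rewrite lt_min => /andP[sr seta]; apply: contrapT => /eqP ss0.
have : [set s + s | s in dball d 0 r] (s + s) by exists s.
rewrite tE => /bound /(_ ss0) eta_le.
by have := dist_double s; have := dist_ge0 0 s; lra.
Qed.

Lemma ball_avoid_seq_double f r (P C : seq X) : 0 < r -> (f + f) \notin C ->
  exists x, [/\ d f x < r, x \notin P & (x + x) \notin C].
Proof.
move=> r0 ffC; case: (pselect doubling_locally_trivial) => [[r' r'0 trivial]|].
  have [|x [fx xP]] := @ball_avoid_seq f (Num.min r r') P; first by rewrite lt_min r0 r'0.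
  move: fx; rewrite lt_min => /andP[fxr fxr']; exists x; split => //.
  have : (x - f) + (x - f) = 0 by apply: trivial; rewrite -(dist_translate f) subrK.
  by rewrite addrACA -opprD => /eqP; rewrite subr_eq0 => /eqP ->.
move=> /doubles_ball_infinite /(_ r0) doubles_infinite.
pose T := [seq c - (f + f) | c <- C] ++ [seq p + p - (f + f) | p <- P].
have [_ [[s fs <-] ssT]] : exists w, [set s + s | s in dball d 0 r] w /\ ~ [set` T] w.
  apply: contrapT => none; apply: doubles_infinite.
  apply: (sub_finite_set _ (finite_seq T)) => w hw.
  by apply: contrapT => wT; apply: none; exists w.
exists (s + f); split; first by rewrite dist_translate.
- apply/negP => sfP; apply: ssT; rewrite /= mem_cat; apply/orP; right.
  by apply/mapP; exists (s + f); rewrite // addrACA addrK.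
- apply/negP => sfC; apply: ssT; rewrite /= mem_cat; apply/orP; left.
  by apply/mapP; exists (s + f + (s + f)); rewrite // addrACA addrK.
Qed.

Lemma sidon_extend (cs S : seq X) f r : 0 < r -> f \in cs -> sidon S ->
  midpoint_free cs S ->
  exists x, [/\ d f x < r, x \notin S, sidon (x :: S) & midpoint_free cs (x :: S)].
Proof.
move=> r0 fcs hS hC.
pose P := S ++ [seq bc - a | a <- S, bc <- [seq b + c | b <- S, c <- S]]
            ++ [seq g + g - b | g <- cs, b <- S].
pose C := [seq b + c | b <- S, c <- [seq y <- S | y != b]].
have ffC : (f + f) \notin C.
  apply/negP => /allpairsPdep[b [c [bS]]]; rewrite mem_filter => /andP[cb cS] E.
  by apply: (hC b c f bS cS _ fcs (esym E)) => bc; rewrite bc eqxx in cb.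
have [x [fx xP xxC]] := @ball_avoid_seq_double f r P C r0 ffC.
have xS : x \notin S by apply: contra xP; rewrite mem_cat => ->.
exists x; split => //.
- apply: sidon_cons => // [a b c aS bS cS E | b c bS cS bc E].
    move/negP: xP; apply; rewrite -[x](addrK a) E !mem_cat; apply/orP; right.
    by apply/orP; left; apply/allpairsP; exists (a, b + c); rewrite /= ?allpairs_f.
  move/negP: xxC; apply; rewrite E; apply: allpairs_f_dep => //.
  by rewrite mem_filter cS andbT eq_sym; apply/eqP.
- apply: midpoint_free_cons => // g b gcs bS E.
  move/negP: xP; apply; rewrite -[x](addrK b) E !mem_cat; apply/orP; right.
  by apply/orP; right; apply/allpairsP; exists (g, b).
Qed.

Lemma sidon_approx r (cs0 : seq X) : 0 < r -> forall cs, {subset cs <= cs0} ->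
  exists xs, [/\ uniq xs, sidon xs, midpoint_free cs0 xs, size xs = size cs &
    [/\ forall f, f \in cs -> exists2 x, x \in xs & d f x < r &
        forall x, x \in xs -> exists2 f, f \in cs & d f x < r]].
Proof.
move=> r0; elim => [|f cs IH] sub; first by exists [::].
have [|xs [xs_uniq hS hC xs_size [near_cs near_xs]]] := IH.
  by move=> y ycs; apply: sub; rewrite in_cons ycs orbT.
have [x [fx xS hS' hC']] := sidon_extend r0 (sub f (mem_head _ _)) hS hC.
exists (x :: xs); split; rewrite /= ?xS ?xs_size //; split.
- move=> g; rewrite in_cons => /orP[/eqP->|gcs]; first by exists x; rewrite ?mem_head.
  by have [y yxs gy] := near_cs g gcs; exists y; rewrite // in_cons yxs orbT.
- move=> y; rewrite in_cons => /orP[/eqP->|yxs]; first by exists f; rewrite ?mem_head.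
  by have [g gcs gy] := near_xs y yxs; exists g; rewrite // in_cons gcs orbT.
Qed.

Lemma dense_finite_spectre_nontrivial :
  dense_in_KX d (fun A => finite_set A /\ spectre A <> [set 0]).
Proof.
move=> K KK e e0; have e20 : 0 < e / 2 by rewrite divr_gt0.
have [cs [cs_nil csK Kcs]] := dcompact_finite_net KK e20.
have [f0 f0cs] : exists f, f \in cs.
  by case: cs cs_nil {csK Kcs} => // f cs; exists f; rewrite mem_head.
have [z [z0 /negP zn0]] := ball_avoid_seq 0 [:: 0] e20.
pose s := cs ++ map (fun f => f + z) cs.
have sA0 : [set` s] !=set0 by exists f0; rewrite /= mem_cat f0cs.
exists [set` s]; split.
- split; first exact: finite_seq.
  move=> spectreE; have := @spectre_cat_shift _ cs z; rewrite spectreE /= => z_eq0.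
  by apply: zn0; rewrite z_eq0 mem_head.
- by split; last exact: finite_dcompact.
- apply: (@le_lt_trans _ _ (e / 2)); last lra.
  apply: dH_le => //; first by case: KK.
  + move=> a Ka; have [f fcs fa] := Kcs a Ka.
    by exists f; [rewrite /= mem_cat fcs | rewrite distC ltW].
  + move=> x; rewrite /= mem_cat => /orP[xcs|/mapP[f fcs ->]].
      by exists x; [exact: csK | rewrite dist_xx ltW].
    by exists f; [exact: csK | rewrite distC addrC dist_translate ltW].
Qed.

Lemma dense_net_set : dense_in_KX d (net_set (X:=X)).
Proof.
move=> K KK e e0; have e30 : 0 < e / 3 by rewrite divr_gt0.
have [cs [cs_nil csK Kcs]] := dcompact_finite_net KK e30.
(* Repeating the net forces the approximating Sidon set to have three points. *)
pose cs3 := cs ++ cs ++ cs.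
have mem_cs3 f : (f \in cs3) = (f \in cs) by rewrite !mem_cat !orbb.
have [xs [xs_uniq hS _ xs_size [near_cs near_xs]]] := sidon_approx e30 (fun x (h : x \in cs3) => h).
have xs_size3 : (2 < size xs)%N.
  by rewrite xs_size !size_cat; case: (cs) cs_nil => // ? ?; rewrite /= !addSn !addnS.
have xsA0 : [set` xs] !=set0.
  by exists (nth 0 xs 0); rewrite /= mem_nth // ltnW // ltnW.
exists [set` xs]; split; [exact: sidon_net_set | by split; last exact: finite_dcompact |].
apply: (@le_lt_trans _ _ (e / 3 + e / 3)); last lra.
apply: dH_le => //; first by case: KK.
- move=> a Ka; have [f fcs fa] := Kcs a Ka.
  have [x xxs fx] := near_cs f (etrans (mem_cs3 f) fcs).
  exists x => //; apply: le_trans (dist_triangle a f x) _.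
  by rewrite distC; apply: lerD; apply: ltW.
- move=> x xxs; have [f fcs fx] := near_xs x xxs.
  exists f; first by apply: csK; rewrite -mem_cs3.
  by rewrite distC; apply/ltW/(lt_le_trans fx); rewrite lerDl ltW.
Qed.

End Metric.

Theorem lemma3p6 (R : realType) (X : zmodType) (d : X -> X -> R) :
  is_metric d -> translation_invariant d ->
  (forall (c : X) (r : R), dball d c r !=set0 -> infinite_set (dball d c r)) ->
  dense_in_KX d (fun A => finite_set A /\ spectre A <> [set 0]) /\
  dense_in_KX d (net_set (X:=X)).
Proof.
move=> d_metric d_invariant ball_infinite; split.
- exact: dense_finite_spectre_nontrivial.
- exact: dense_net_set.
Qed.
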